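(* Let $f:X\to Y$ be a morphism of $\mathbf{OMLatGal}$. For $b\in Y$, the inverse image of the kernel $b:\downarrow b\to Y$ is $f^{-1}(\downarrow b\to Y)=(\downarrow f^*(b^\perp)\to X)$. For $a\in X$, the direct image of the kernel $a:\downarrow a\to X$ is $\exists_f(\downarrow a\to X)=(\downarrow(f_*(a)^\perp)\to Y)$.
   Context: An orthomodular lattice is a bounded lattice with an order-reversing involution $x\mapsto x^\perp$ such that $x\wedge x^\perp=0$, $x\vee x^\perp=1$, and $x\le y$ implies $y=x\vee(x^\perp\wedge y)$. The category $\mathbf{OMLatGal}$ has orthomodular lattices as objects; a morphism $f:X\to Y$ is a pair $(f_*,f^* )$ of order-reversing functions $f_*:X\to Y$, $f^*:Y\to X$ such that $y\le f_*(x)$ iff $x\le f^*(y)$ for all $x\in X,y\in Y$. The identity on $X$ is the pair whose both components are $x\mapsto x^\perp$. Composition: $(g\circ f)_*=g_*\circ(-)^\perp\circ f_*$, $(g\circ f)^*=f^*\circ(-)^\perp\circ g^*$. Dagger: $(f_*,f^* )^\dagger=(f^*,f_* )$. It is a dagger kernel category (zero object the one-element lattice); for $a\in X$, $\downarrow a=\{u\le a\}$ with complement $u^{\perp_a}=a\wedge u^\perp$, and the downset morphism $a:\downarrow a\to X$ ($a_*(u)=u^\perp$, $a^*(x)=a\wedge x^\perp$) is a dagger kernel. In a dagger kernel category, $\mathrm{coker}(f)=\ker(f^\dagger)^\dagger$; for a kernel $n$ into $Y$, $f^{-1}(n)=\ker(\mathrm{coker}(n)\circ f)$ (the pullback of $n$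 along $f$); for a kernel $m$ into $X$, $\exists_f(m)=\ker(\mathrm{coker}(f\circ m))$ (the image of $f\circ m$). Kernels are identified up to isomorphism over their codomain. *)

From Stdlib Require Import ProofIrrelevance Setoid.
Set Implicit Arguments.

Record OML := {
  car :> Type;
  le : car -> car -> Prop;
  meet : car -> car -> car;
  join : car -> car -> car;
  bot : car;
  top : car;
  perp : car -> car;
  le_refl : forall x, le x x;
  le_trans : forall x y z, le x y -> le y z -> le x z;
  le_antisym : forall x y, le x y -> le y x -> x = y;
  meet_glb : forall x y z, le z (meet x y) <-> (le z x /\ le z y);
  join_lub : forall x y z, le (join x y) z <-> (le x z /\ le y z);
  bot_le : forall x, le bot x;
  le_top : forall x, le x top;
  perp_rev : forall x y, le x y -> le (perp y) (perp x);
  perp_invol : forall x, perp (perp x) = x;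
  meet_perp : forall x, meet x (perp x) = bot;
  join_perp : forall x, join x (perp x) = top;
  orthomod : forall x y, le x y -> y = join x (meet (perp x) y)
}.

Arguments le {o} _ _.
Arguments meet {o} _ _.
Arguments join {o} _ _.
Arguments bot {o}.
Arguments top {o}.
Arguments perp {o} _.

Section OMLFacts.
Variable X : OML.
Implicit Types x y z : X.

Lemma meet_l x y : le (meet x y) x.
Proof. apply (proj1 (meet_glb X x y _) (le_refl X _)). Qed.
Lemma meet_r x y : le (meet x y) y.
Proof. apply (proj1 (meet_glb X x y _) (le_refl X _)). Qed.
Lemma join_l x y : le x (join x y).
Proof. apply (proj1 (join_lub X x y _) (le_refl X _)). Qed.
Lemma join_r x y : le y (join x y).
Proof. apply (proj1 (join_lub X x y _) (le_refl X _)). Qed.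

Lemma perp_meet x y : perp (meet x y) = join (perp x) (perp y).
Proof.
  apply le_antisym.
  - rewrite <- (perp_invol X (join _ _)). apply perp_rev.
    apply meet_glb; split.
    + rewrite <- (perp_invol X x) at 2. apply perp_rev, join_l.
    + rewrite <- (perp_invol X y) at 2. apply perp_rev, join_r.
  - apply join_lub; split; apply perp_rev; [apply meet_l | apply meet_r].
Qed.

Lemma perp_join x y : perp (join x y) = meet (perp x) (perp y).
Proof.
  rewrite <- (perp_invol X x) at 1. rewrite <- (perp_invol X y) at 1.
  rewrite <- perp_meet. apply perp_invol.
Qed.
End OMLFacts.

Lemma sig_eq (A : Type) (P : A -> Prop) (u v : {x | P x}) :
  proj1_sig u = proj1_sig v -> u = v.
Proof. destruct u, v; simpl; intros ->; f_equal; apply proof_irrelevance. Qed.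

Section Down.
Variables (X : OML) (a : X).

Definition dcar := {u : X | le u a}.
Definition dle (u v : dcar) := le (proj1_sig u) (proj1_sig v).
Definition dmeet (u v : dcar) : dcar :=
  exist (fun w => le w a) (meet (proj1_sig u) (proj1_sig v))
        (le_trans X _ _ _ (meet_l X _ _) (proj2_sig u)).
Definition djoin (u v : dcar) : dcar :=
  exist (fun w => le w a) (join (proj1_sig u) (proj1_sig v))
        (proj2 (join_lub X _ _ _) (conj (proj2_sig u) (proj2_sig v))).
Definition dbot : dcar := exist (fun u => le u a) bot (bot_le X a).
Definition dtop : dcar := exist (fun u => le u a) a (le_refl X a).
Definition dperp (u : dcar) : dcar :=
  exist (fun v => le v a) (meet a (perp (proj1_sig u))) (meet_l X _ _).

Lemma meet_down (u v : X) : le v a -> meet (meet a u) v = meet u v.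
Proof.
  intro Hv. apply le_antisym; apply meet_glb; split.
  - eapply le_trans; [apply meet_l | apply meet_r].
  - apply meet_r.
  - apply meet_glb; split; [exact (le_trans X _ _ _ (meet_r X _ _) Hv) | apply meet_l].
  - apply meet_r.
Qed.

Definition down : OML.
Proof.
  refine (@Build_OML dcar dle dmeet djoin dbot dtop dperp _ _ _ _ _ _ _ _ _ _ _ _);
  unfold dle; simpl.
  - intros; apply le_refl.
  - intros; eapply le_trans; eauto.
  - intros u v H1 H2; apply sig_eq, le_antisym; auto.
  - intros; apply meet_glb.
  - intros; apply join_lub.
  - intros; apply bot_le.
  - intros u; exact (proj2_sig u).
  - intros u v H; apply meet_glb; split; [apply meet_l|].
    eapply le_trans; [apply meet_r | apply perp_rev; exact H].
  - intros [u Hu]; apply sig_eq; simpl.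
    assert (E := orthomod X (perp a) (perp u) (perp_rev X _ _ Hu)).
    apply (f_equal perp) in E. rewrite perp_join, !perp_invol in E.
    symmetry; exact E.
  - intros [u Hu]; apply sig_eq; simpl. apply le_antisym; [|apply bot_le].
    rewrite <- (meet_perp X u). apply meet_glb; split; [apply meet_l|].
    eapply le_trans; [apply meet_r | apply meet_r].
  - intros [u Hu]; apply sig_eq; simpl.
    transitivity (join u (meet (perp u) a)); [f_equal|symmetry; apply orthomod; exact Hu].
    apply le_antisym; apply meet_glb; split;
      (apply meet_r || apply meet_l).
  - intros [u Hu] [v Hv] H; apply sig_eq; simpl in *.
    rewrite meet_down by exact Hv. apply orthomod; exact H.
Defined.
End Down.
Arguments down {X} a.

Definition unitOML : OML.
Proof.
  refine (@Build_OML unit (fun _ _ => True) (fun _ _ => tt) (fun _ _ => tt)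
            tt tt (fun _ => tt) _ _ _ _ _ _ _ _ _ _ _ _);
  repeat intros []; try tauto; reflexivity.
Defined.

Record Mor (X Y : OML) := {
  fs : X -> Y;
  fu : Y -> X;
  fs_rev : forall x x', le x x' -> le (fs x') (fs x);
  fu_rev : forall y y', le y y' -> le (fu y') (fu y);
  gal : forall x y, le y (fs x) <-> le x (fu y)
}.
Arguments fs {X Y} _ _.
Arguments fu {X Y} _ _.

Definition meq {X Y : OML} (f g : Mor X Y) : Prop :=
  (forall x, fs f x = fs g x) /\ (forall y, fu f y = fu g y).

Definition idm (X : OML) : Mor X X.
Proof.
  refine (@Build_Mor X X perp perp _ _ _).
  - intros; apply perp_rev; auto.
  - intros; apply perp_rev; auto.
  - intros x y; split; intro H; apply perp_rev in H; rewrite perp_invol in H; exact H.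
Defined.

Definition comp {X Y Z : OML} (g : Mor Y Z) (f : Mor X Y) : Mor X Z.
Proof.
  refine (@Build_Mor X Z (fun x => fs g (perp (fs f x)))
                         (fun z => fu f (perp (fu g z))) _ _ _).
  - intros x x' H. apply fs_rev, perp_rev, fs_rev, H.
  - intros z z' H. apply fu_rev, perp_rev, fu_rev, H.
  - intros x z. rewrite gal. split; intro H.
    + apply gal. apply perp_rev in H. rewrite perp_invol in H. exact H.
    + apply gal in H. apply perp_rev in H. rewrite perp_invol in H. exact H.
Defined.

Definition dagger {X Y : OML} (f : Mor X Y) : Mor Y X.
Proof.
  refine (@Build_Mor Y X (fu f) (fs f) _ _ _).
  - apply fu_rev.
  - apply fs_rev.
  - intros y x. symmetry. apply gal.
Defined.

Definition toZero (X : OML) : Mor X unitOML.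
Proof.
  refine (@Build_Mor X unitOML (fun _ => tt) (fun _ => top) _ _ _);
    simpl; intros; try exact I; try apply le_refl.
  split; intros; [apply le_top | exact I].
Defined.

Definition fromZero (Y : OML) : Mor unitOML Y.
Proof.
  refine (@Build_Mor unitOML Y (fun _ => top) (fun _ => tt) _ _ _);
    simpl; intros; try exact I; try apply le_refl.
  split; intros; [exact I | apply le_top].
Defined.

Definition zerom (X Y : OML) : Mor X Y := comp (fromZero Y) (toZero X).

Definition downmor {X : OML} (a : X) : Mor (down a) X.
Proof.
  refine (@Build_Mor (down a) X (fun u => perp (proj1_sig u))
            (fun x => exist (fun v => le v a) (meet a (perp x)) (meet_l X _ _)) _ _ _);
    simpl; unfold dle; simpl.
  - intros u v H. apply perp_rev, H.
  - intros x y H. apply meet_glb; split; [apply meet_l|].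
    eapply le_trans; [apply meet_r | apply perp_rev, H].
  - intros [u Hu] x; simpl. split; intro H.
    + apply meet_glb; split; [exact Hu|].
      apply perp_rev in H; rewrite perp_invol in H; exact H.
    + apply meet_glb in H. destruct H as [_ H].
      apply perp_rev in H; rewrite perp_invol in H; exact H.
Defined.

Definition is_kernel {K X Y : OML} (k : Mor K X) (g : Mor X Y) : Prop :=
  meq (comp g k) (zerom K Y) /\
  forall (Z : OML) (h : Mor Z X),
    meq (comp g h) (zerom Z Y) ->
    exists u : Mor Z K, meq (comp k u) h /\
      forall u' : Mor Z K, meq (comp k u') h -> meq u' u.


(* The whole theorem rests on one computation: every morphism h : X -> Y has
   the downset ↓c -> X with c = h^*(1) as a kernel (downmor_kernel).  The
   proof uses that a morphism m is zero iff m^*(1) = 1 (zero_iff_fu_top),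
   that m : Z -> X factors through ↓c exactly when m_*(z)^⊥ <= c for all z
   (downset_factor), and that downset morphisms are monic because of the
   Sasaki identity c ∧ (c ∧ p^⊥)^⊥ = p for p <= c (downmor_mono).
   Conversely, any kernel k of g has k_*(1) = g^*(1)^⊥ (kernel_top), since k
   and the downset kernel factor through each other.

   For the theorem, coker(n) is a kernel k of n^†, so k_*(1) is computed
   from n by kernel_top; the morphisms coker(b) ∘ f and coker(f ∘ a)
   then have upper parts at 1 equal to f^*(b^⊥) and f_*(a)^⊥ respectively,
   and downmor_kernel identifies their kernels as the claimed downsets. *)

(* The upper adjoint of a Galois connection is determined by the lower one;
   hence morphisms are equal as soon as their lower parts agree. *)
Lemma fu_determined_by_fs {X Y : OML} (m m' : Mor X Y) :
  (forall x, fs m x = fs m' x) -> forall y, fu m y = fu m' y.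
Proof.
  intros H y. apply le_antisym.
  - apply gal. rewrite <- H. apply gal. apply le_refl.
  - apply gal. rewrite H. apply gal. apply le_refl.
Qed.

Lemma meq_of_fs {X Y : OML} (m m' : Mor X Y) :
  (forall x, fs m x = fs m' x) -> meq m m'.
Proof. intro H. split; [exact H | apply fu_determined_by_fs; exact H]. Qed.

Lemma zero_iff_fu_top {X Y : OML} (m : Mor X Y) :
  meq m (zerom X Y) <-> fu m top = top.
Proof.
  split.
  - intros [_ Hu]. exact (Hu top).
  - intro H. apply meq_of_fs. intro x. simpl.
    apply le_antisym; [apply le_top |]. apply gal. rewrite H. apply le_top.
Qed.

(* Sasaki identity: in ↓c the orthocomplement u ↦ c ∧ u^⊥ is involutive. *)
Lemma sasaki_inv (X : OML) (c p : X) :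
  le p c -> meet c (perp (meet c (perp p))) = p.
Proof.
  intro Hp. exact (f_equal (@proj1_sig _ _) (perp_invol (down c) (exist _ p Hp))).
Qed.

Lemma downmor_mono {X Z : OML} (c : X) (u u' : Mor Z (down c)) :
  meq (comp (downmor c) u) (comp (downmor c) u') -> meq u u'.
Proof.
  intros [Hs _]. apply meq_of_fs. intro z. apply sig_eq.
  specialize (Hs z). simpl in Hs. apply (f_equal perp) in Hs.
  rewrite !perp_invol in Hs.
  rewrite <- (sasaki_inv X c (proj1_sig (fs u z))) by exact (proj2_sig (fs u z)).
  rewrite Hs. apply sasaki_inv. exact (proj2_sig (fs u' z)).
Qed.

Definition downset_factor {X Z : OML} (c : X) (m : Mor Z X) : Mor Z (down c).
Proof.
  refine (@Build_Mor Z (down c)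
            (fun z => exist (fun w => le w c) (meet c (fs m z)) (meet_l X _ _))
            (fun v => fu m (proj1_sig v)) _ _ _); simpl; unfold dle; simpl.
  - intros z z' H. apply meet_glb; split; [apply meet_l |].
    eapply le_trans; [apply meet_r | apply fs_rev, H].
  - intros [v Hv] [v' Hv'] H; simpl in *. apply fu_rev, H.
  - intros z [v Hv]; simpl. rewrite <- gal. split; intro H.
    + eapply le_trans; [exact H | apply meet_r].
    + apply meet_glb; split; assumption.
Defined.

Lemma downset_factor_comm {X Z : OML} (c : X) (m : Mor Z X) :
  (forall z, le (perp (fs m z)) c) ->
  meq (comp (downmor c) (downset_factor c m)) m.
Proof.
  intro Hm. apply meq_of_fs. intro z. simpl.
  rewrite <- (perp_invol X (fs m z)) at 1.
  rewrite sasaki_inv by apply Hm. apply perp_invol.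
Qed.

Lemma downmor_kernel {X Y : OML} (h : Mor X Y) : is_kernel (downmor (fu h top)) h.
Proof.
  set (c := fu h top). split.
  - apply zero_iff_fu_top. simpl. apply sig_eq. simpl.
    rewrite perp_invol. apply le_antisym;
      [apply meet_l | apply meet_glb; split; apply le_refl].
  - intros Z m Hm.
    (* h ∘ m = 0 means c^⊥ <= m_*(1), hence c^⊥ <= m_*(z) for every z *)
    assert (Hperp_c : le (perp c) (fs m top)).
    { apply zero_iff_fu_top in Hm. simpl in Hm. fold c in Hm.
      apply gal. rewrite Hm. apply le_refl. }
    assert (Hfactors : forall z, le (perp (fs m z)) c).
    { intro z. rewrite <- (perp_invol X c). apply perp_rev.
      eapply le_trans; [exact Hperp_c | apply fs_rev, le_top]. }
    exists (downset_factor c m). split.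
    + exact (downset_factor_comm c m Hfactors).
    + intros u' Hu'. apply downmor_mono.
      destruct Hu' as [Hs' Hu']; destruct (downset_factor_comm c m Hfactors) as [Hs Hu].
      split; intro; [rewrite Hs', Hs | rewrite Hu', Hu]; reflexivity.
Qed.

Lemma downmor_kernel_at {X Y : OML} (c : X) (h : Mor X Y) :
  c = fu h top -> is_kernel (downmor c) h.
Proof. intros ->. apply downmor_kernel. Qed.

(* Any kernel k of g has k_*(1) = g^*(1)^⊥: it factors through the downset
   kernel of g, and g ∘ k = 0 gives the reverse inequality. *)
Lemma kernel_top {K X Y : OML} (k : Mor K X) (g : Mor X Y) :
  is_kernel k g -> fs k top = perp (fu g top).
Proof.
  intros [Hz Hu]. apply le_antisym.
  - destruct (Hu _ _ (proj1 (downmor_kernel g))) as [u [[E _] _]].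
    specialize (E top). simpl in E.
    eapply le_trans; [apply fs_rev, le_top |]. rewrite E. apply le_refl.
  - apply zero_iff_fu_top in Hz. simpl in Hz.
    apply gal. rewrite Hz. apply le_refl.
Qed.

Theorem mainTheorem6 (X Y : OML) (f : Mor X Y) :
  (forall (b : Y) (C : OML) (k : Mor C Y),
      is_kernel k (dagger (downmor b)) ->
      is_kernel (downmor (fu f (perp b))) (comp (dagger k) f))
  /\
  (forall (a : X) (C : OML) (k : Mor C Y),
      is_kernel k (dagger (comp f (downmor a))) ->
      is_kernel (downmor (perp (fs f a))) (dagger k)).
Proof.
  split.
  - (* coker(b)_*(1) = b, so (coker(b) ∘ f)^*(1) = f^*(b^⊥) *)
    intros b C k Hk. apply downmor_kernel_at. simpl.
    rewrite (kernel_top k _ Hk). simpl. rewrite !perp_invol. reflexivity.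
  - (* coker(f ∘ a)_*(1) = f_*(a)^⊥ *)
    intros a C k Hk. apply downmor_kernel_at. simpl.
    rewrite (kernel_top k _ Hk). simpl. rewrite !perp_invol. reflexivity.
Qed.
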